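(* The following are equivalent. (i) For every $0<\delta\leq 1$ there exists a positive integer $N=\mathrm{DPHJ}(2,2,\delta)$ such that for every $n\geq N$, every subset $A\subseteq W(n,2,2)$ with $|A|\geq\delta\,2^{n^2}$ contains a polynomial combinatorial line of $W(n,2,2)$. (ii) $\lim_{n\to\infty}\Delta^\circ_n(\mathcal{C}^\circ)=0$; that is, every $\mathcal{C}^\circ$-HJ-code $\mathcal{G}\subseteq\mathbb{F}_2^{\binom{[n]}{\leq 2}}$ satisfies $\mathbb{P}[\mathcal{G}]=o_{n\to\infty}(1)$.
   Context: Polynomial words: $W(n,2,2)$ is the set of all maps $w\colon[n]^2\to\{1,2\}$ (it has $2^{n^2}$ elements). A polynomial variable word is a map $v\colon[n]^2\to\{1,2\}\cup\{x\}$ ($x$ a new symbol) such that $v^{-1}(\{x\})=X\times X$ for some nonempty $X\subseteq[n]$; $v(a)$ is obtained by replacing each occurrence of $x$ by $a$. A polynomial combinatorial line is a set $\{v(1),v(2)\}$ for a polynomial variable word $v$. Graphs: $\binom{V}{\leq 2}$ is the set of nonempty subsets of $V$ of size at most 2; a graph on $V$ is a subset of $\binom{V}{\leq 2}$. $V(G)$ is the union of the members of $G$; graphs $G,H$ are isomorphic if there is a bijection $\phi\colon V(G)\to V(H)$ with $\{x,y\}\in G\iff\{\phi(x),\phi(y)\}\in H$ for all $x,y\in V(G)$. Graphs on $[n]$ are identified with elements of $\mathbb{F}_2^{\binom{[n]}{\leq 2}}$; $G_1+G_2$ is symmetric difference; $\mathbb{P}$ is the uniform probability measure. $K_r^\circ=\binom{[r]}{\leq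 2}$, $\mathcal{C}^\circ=\{K_r^\circ:r\geq 1\}$. $\mathcal{G}$ is a $\mathcal{C}^\circ$-HJ-code if for all $G_1,G_2\in\mathcal{G}$ with $G_1\supseteq G_2$, $G_1+G_2$ is not isomorphic to any member of $\mathcal{C}^\circ$. $\Delta^\circ_n(\mathcal{C}^\circ)$ is the maximum of $\mathbb{P}[\mathcal{G}]$ over $\mathcal{C}^\circ$-HJ-codes $\mathcal{G}\subseteq\mathbb{F}_2^{\binom{[n]}{\leq 2}}$. *)

From HB Require Import structures.
From mathcomp Require Import all_boot all_order all_algebra.
From mathcomp Require Import reals.
Set Implicit Arguments. Unset Strict Implicit. Unset Printing Implicit Defensive.
Import Order.TTheory GRing.Theory Num.Theory.
From mathcomp Require Import boolp.
Local Open Scope ring_scope.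

(* [n] is modelled by 'I_n; the alphabet {1,2} by bool (false = 1, true = 2). *)
Definition word (n : nat) := {ffun 'I_n * 'I_n -> bool}.

(* A polynomial variable word: values in {1,2} ∪ {x}, with x encoded as None,
   such that the preimage of x is X × X for some nonempty X ⊆ [n]. *)
Definition is_poly_var_word (n : nat) (v : {ffun 'I_n * 'I_n -> option bool}) : Prop :=
  exists X : {set 'I_n}, X != set0 /\ [set p | v p == None] = setX X X.

Definition subst_word (n : nat) (v : {ffun 'I_n * 'I_n -> option bool}) (a : bool) : word n :=
  [ffun p => if v p is Some b then b else a].

Definition contains_poly_line (n : nat) (A : {set word n}) : Prop :=
  exists v : {ffun 'I_n * 'I_n -> option bool},
    is_poly_var_word v /\ subst_word v false \in A /\ subst_word v true \in A.

Definition DPHJ_2_2 (R : realType) : Prop :=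
  forall delta : R, 0 < delta <= 1 ->
    exists N : nat, (0 < N)%N /\
      forall n : nat, (N <= n)%N ->
        forall A : {set word n},
          delta * (2 ^+ (n ^ 2)%N) <= (#|A|)%:R -> contains_poly_line A.

Definition edges_le2 (T : finType) : {set {set T}} := [set e : {set T} | (0 < #|e| <= 2)%N].

Definition vertex_set (T : finType) (G : {set {set T}}) : {set T} := \bigcup_(e in G) e.

Definition graph_iso (T U : finType) (G : {set {set T}}) (H : {set {set U}}) : Prop :=
  exists phi : T -> U,
    {in vertex_set G &, injective phi} /\
    phi @: vertex_set G = vertex_set H /\
    (forall x y, x \in vertex_set G -> y \in vertex_set G ->
       ([set x; y] \in G) = ([set phi x; phi y] \in H)).

Definition Kcirc (r : nat) : {set {set 'I_r}} := edges_le2 'I_r.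

Definition iso_to_Ccirc (T : finType) (G : {set {set T}}) : Prop :=
  exists r : nat, (1 <= r)%N /\ graph_iso G (Kcirc r).

(* Symmetric difference (addition in F_2^{binom([n], <=2)}). *)
Definition gsum (T : finType) (G1 G2 : {set {set T}}) : {set {set T}} :=
  (G1 :\: G2) :|: (G2 :\: G1).

Definition is_graph_on (n : nat) (G : {set {set 'I_n}}) : bool := G \subset edges_le2 'I_n.

Definition HJ_code (n : nat) (GG : {set {set {set 'I_n}}}) : Prop :=
  (forall G, G \in GG -> is_graph_on G) /\
  (forall G1 G2, G1 \in GG -> G2 \in GG -> G2 \subset G1 -> ~ iso_to_Ccirc (gsum G1 G2)).

Definition HJ_codeb (n : nat) (GG : {set {set {set 'I_n}}}) : bool :=
  `[< HJ_code GG >].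

Definition Prob (R : realType) (n : nat) (GG : {set {set {set 'I_n}}}) : R :=
  (#|GG|)%:R / (2 ^+ #|edges_le2 'I_n|).

Definition Delta (R : realType) (n : nat) : R :=
  (\max_(GG : {set {set {set 'I_n}}} | HJ_codeb GG) #|GG|)%:R / (2 ^+ #|edges_le2 'I_n|).

Definition Delta_to_zero (R : realType) : Prop :=
  forall eps : R, 0 < eps -> exists N : nat, forall n : nat, (N <= n)%N -> `|Delta R n| < eps.

From mathcomp Require Import all_boot all_order all_algebra.
From mathcomp Require Import reals zify boolp.
Import Order.TTheory GRing.Theory Num.Theory.
Set Implicit Arguments. Unset Strict Implicit. Unset Printing Implicit Defensive.

(* (i) -> (ii): reading a word off its upper triangle {(i, j) | i <= j} gives a graph on [n]
   whose fibres all have the same size, so the preimage of a C°-HJ-code has the density of the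
   code; a polynomial line {v(1), v(2)} in that preimage would give nested graphs differing by
   the looped clique on the variable set X, which a code forbids.
   (ii) -> (i): pick M with Δ_M small and cut [n] into k = q 2^(M^2 - E) blocks of size M
   (E = #edges of K_M°).  A word symmetric on block j is, once its values off that block are
   fixed, a graph on the block, and two such graphs G1 ⊇ G2 with G1 + G2 a looped clique lift to
   a polynomial line.  Symmetry on distinct blocks concerns disjoint coordinates, so the words
   symmetric on no block have density (1 - 2^(E - M^2))^k <= 1/(1+q) by Bernoulli's inequality.
   Hence a set of density > 1/(1+q) has, over some block and some fibre, a family of graphs of
   density > Δ_M: not a code, hence a line. *)

Definition clique (T : finType) (X : {set T}) : {set {set T}} :=
  [set [set a; b] | a in X, b in X].

Lemma set2_edges_le2 (T : finType) (a b : T) : [set a; b] \in edges_le2 T.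
Proof. by rewrite inE cards2; case: (a != b). Qed.

Lemma edges_le2_set2 (T : finType) (e : {set T}) :
  e \in edges_le2 T -> exists a b, e = [set a; b].
Proof.
rewrite inE => /andP [e_gt0 e_le2].
have : (#|e| == 1) || (#|e| == 2) by case: #|e| e_gt0 e_le2 => // [[|[|]]].
case/orP; first by case/cards1P => x ->; exists x, x; rewrite setUid.
by case/cards2P => x [y [_ ->]]; exists x, y.
Qed.

Lemma eq_set2 (T : finType) (x y a b : T) :
  [set x; y] = [set a; b] -> (x = a /\ y = b) \/ (x = b /\ y = a).
Proof.
move=> E.
have : x \in [set a; b] by rewrite -E set21.
have : y \in [set a; b] by rewrite -E set22.
have : a \in [set x; y] by rewrite E set21.
have : b \in [set x; y] by rewrite E set22.
rewrite !inE => /orP [] /eqP hb /orP [] /eqP ha /orP [] /eqP hy /orP [] /eqP hx;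
  subst; by [left | right].
Qed.

Lemma mem_clique (T : finType) (X : {set T}) (a b : T) :
  ([set a; b] \in clique X) = (a \in X) && (b \in X).
Proof.
apply/imset2P/andP => [[a' b' aX bX /eq_set2 [] [-> ->]] //|[aX bX]]; last by exists a b.
Qed.

Lemma vertex_set_clique (T : finType) (X : {set T}) : vertex_set (clique X) = X.
Proof.
apply/setP => x; apply/bigcupP/idP => [[_ /imset2P [a b aX bX ->]]|xX].
  by case/set2P => ->.
by exists [set x; x]; rewrite ?mem_clique ?xX ?set21.
Qed.

Lemma clique_iso_to_Ccirc (T : finType) (X : {set T}) :
  X != set0 -> iso_to_Ccirc (clique X).
Proof.
case/set0Pn => x0 x0X; exists #|X|; split; first by rewrite card_gt0; apply/set0Pn; exists x0.
exists (enum_rank_in x0X); rewrite vertex_set_clique; split.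
  by move=> x y xX yX; apply: enum_rank_in_inj.
split.
  apply/setP => i; apply/imsetP/bigcupP => _.
    by exists [set i; i]; rewrite ?set2_edges_le2 ?set21.
  by exists (enum_val i); rewrite ?enum_valP ?enum_valK_in.
by move=> x y xX yX; rewrite set2_edges_le2 mem_clique xX yX.
Qed.

Lemma iso_to_Ccirc_clique (T : finType) (H : {set {set T}}) :
  H \subset edges_le2 T -> iso_to_Ccirc H ->
  vertex_set H != set0 /\ H = clique (vertex_set H).
Proof.
move=> /subsetP Hedges [r [r_gt0 [phi [_ [im Hiso]]]]]; split.
  apply/negP => /eqP V0; move/setP: im => /(_ (Ordinal r_gt0)).
  rewrite V0 imset0 inE => /esym /bigcupP []; exists [set Ordinal r_gt0; Ordinal r_gt0].
    exact: set2_edges_le2.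
  by rewrite set21.
apply/setP => e; apply/idP/imset2P => [eH|[a b aV bV ->]].
  have [a [b Eab]] := edges_le2_set2 (Hedges _ eH).
  by exists a b; rewrite // -?Eab; apply/bigcupP; exists e; rewrite // Eab ?set21 ?set22.
by rewrite Hiso // set2_edges_le2.
Qed.

Lemma card_edges_le2_le (T : finType) : #|edges_le2 T| <= #|T| * #|T|.
Proof.
rewrite -card_prod; apply: leq_trans (leq_imset_card (fun p : T * T => [set p.1; p.2]) _).
apply: subset_leq_card; apply/subsetP => e /edges_le2_set2 [a [b ->]].
by apply/imsetP; exists (a, b).
Qed.

Lemma card_sum_fibres (T U : finType) (f : T -> U) (X : {set T}) :
  #|X| = \sum_(u : U) #|[set x in X | f x == u]|.
Proof.
rewrite -sum1_card (partition_big f predT) //=; apply: eq_bigr => u _.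
by rewrite -sum1_card; apply: eq_bigl => x; rewrite inE.
Qed.

Lemma card_ffun_agree_on (T : finType) (c : pred T) (r : {ffun T -> bool}) :
  #|[set w : {ffun T -> bool} | [forall x, c x ==> (w x == r x)]]| = 2 ^ #|[set x | ~~ c x]|.
Proof.
pose F x := if c x then pred1 (r x) else predT.
have -> : [set w : {ffun T -> bool} | [forall x, c x ==> (w x == r x)]] = [set w in family F].
  apply/setP => w; rewrite !inE; apply/forallP/familyP => H x; move: (H x); rewrite /F;
  by case: (c x) => //= /eqP ->.
rewrite cardsE card_family foldrE big_map big_enum /= /F.
rewrite (bigID c) /= big1 ?mul1n; last by move=> x ->; rewrite card1.
transitivity (\prod_(x | ~~ c x) 2); last by rewrite prod_nat_const cardsE.
by apply: eq_bigr => x /negbTE ->; rewrite card_bool.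
Qed.

Lemma exists_ratio_ge_average (I : finType) (a f : I -> nat) :
  0 < \sum_i f i -> (forall i, f i = 0 -> a i = 0) ->
  exists i, 0 < f i /\ (\sum_j a j) * f i <= a i * \sum_j f j.
Proof.
move=> W_gt0 a0.
have [i0 fi0] : exists i, 0 < f i.
  apply/existsP; move: W_gt0; apply: contraLR; rewrite negb_exists => /forallP H.
  rewrite -leqNgt leqn0 sum_nat_eq0; apply/forallP => i.
  by move: (H i); rewrite -leqNgt leqn0.
case: (boolP [exists i, (0 < f i) && ((\sum_j a j) * f i <= a i * \sum_j f j)]).
  by move=> /existsP [i /andP [h1 h2]]; exists i.
rewrite negb_exists => /forallP below.
have below_le i : a i * \sum_j f j <= (\sum_j a j) * f i.
  move: (below i); case: (posnP (f i)) => [fi0'|fi_gt0] /=.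
    by rewrite (a0 _ fi0') mul0n.
  by rewrite -ltnNge => /ltnW.
have : \sum_i a i * \sum_j f j < \sum_i (\sum_j a j) * f i.
  rewrite (bigD1 i0) //= [X in _ < X](bigD1 i0) //= -addSn leq_add //.
    by move: (below i0); rewrite fi0 /= ltnNge.
  by apply: leq_sum => i _; apply: below_le.
by rewrite -big_distrl -big_distrr /= mulnC ltnn.
Qed.

Lemma bernoulli_nat (x y t : nat) : x ^ t * (x + t * y) <= (x + y) ^ t * x.
Proof.
elim: t => [|t IH]; first by rewrite !expn0 mul0n addn0 mul1n.
rewrite !expnS; move: IH; set X := x ^ t; set Y := (x + y) ^ t => IH.
have step : x * X * (x + t.+1 * y) <= X * (x + t * y) * (x + y) by nia.
by apply: (leq_trans step); rewrite [(x + y) * Y]mulnC [in X in _ <= X]mulnAC leq_mul2r IH orbT.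
Qed.

(* With [T = Q P] and [k = q P] this reads [(1 - 1/P) ^ (q P) <= 1 / (1 + q)]. *)
Lemma geometric_decay_bound (b W T Q P q k : nat) :
  T = Q * P -> k = q * P -> 0 < Q -> 0 < P -> 0 < q ->
  b * T ^ k <= (T - Q) ^ k * W -> b * (1 + q) <= W.
Proof.
move=> TQP kqP Q_gt0 P_gt0 q_gt0 hb.
have QT : Q <= T by rewrite TQP leq_pmulr.
have T_gt0 : 0 < T by apply: leq_trans QT.
have k_gt0 : 0 < k by rewrite kqP muln_gt0 q_gt0.
set x := T - Q in hb; have Tx : T = x + Q by rewrite subnK.
have [x0|x_gt0] := posnP x.
  move: hb; rewrite x0 exp0n // mul0n leqn0 muln_eq0 expn_eq0 (gtn_eqF T_gt0) orbF.
  by move=> /eqP ->.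
have bern := bernoulli_nat x Q k; rewrite -Tx in bern.
have hx : b * (x + k * Q) <= W * x.
  rewrite -(@leq_pmul2l (x ^ k)) ?expn_gt0 ?x_gt0 //.
  apply: (@leq_trans (b * (T ^ k * x))); first by rewrite mulnCA leq_mul2l bern orbT.
  by rewrite !mulnA leq_mul2r hb orbT.
have qxkQ : q * x <= k * Q.
  by rewrite kqP -mulnA [P * _]mulnC -TQP leq_mul2l leq_subr orbT.
by rewrite -(@leq_pmul2r x) //; apply: leq_trans hx; nia.
Qed.

Lemma card_word n : #|[set: word n]| = 2 ^ (n ^ 2).
Proof. by rewrite cardsT card_ffun card_prod !card_ord card_bool mulnn. Qed.

Section UpperGraph.
Variable n : nat.

Definition upper_graph (w : word n) : {set {set 'I_n}} :=
  [set [set p.1; p.2] | p in [set p : 'I_n * 'I_n | (p.1 <= p.2) && w p]].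

Lemma edges_le2_ord_set2 (e : {set 'I_n}) :
  e \in edges_le2 'I_n -> exists a b : 'I_n, a <= b /\ e = [set a; b].
Proof.
case/edges_le2_set2 => a [b ->]; case: (leqP a b) => [ab|ba]; first by exists a, b.
by exists b, a; rewrite setUC ltnW.
Qed.

Lemma upper_graph_sub w : upper_graph w \subset edges_le2 'I_n.
Proof. by apply/subsetP => e /imsetP [p _ ->]; apply: set2_edges_le2. Qed.

Lemma mem_upper_graph w (a b : 'I_n) : a <= b -> ([set a; b] \in upper_graph w) = w (a, b).
Proof.
move=> ab; apply/imsetP/idP => [[[a' b']]|wab]; last by exists (a, b); rewrite ?inE ?ab.
rewrite inE /= => /andP [ab' wab'] /eq_set2 [[-> ->] //|[ea eb]].
have E : a' = b' by apply: val_inj; apply/eqP; rewrite eqn_leq ab' -ea -eb ab.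
by move: wab'; rewrite ea eb E.
Qed.

Definition graph_word (G : {set {set 'I_n}}) : word n := [ffun p => [set p.1; p.2] \in G].

Definition nlower := #|[set p : 'I_n * 'I_n | ~~ (p.1 <= p.2)]|.

Lemma card_upper_graph_fibre (G : {set {set 'I_n}}) : G \subset edges_le2 'I_n ->
  #|[set w | upper_graph w == G]| = 2 ^ nlower.
Proof.
move=> /subsetP Gedges.
rewrite -(card_ffun_agree_on (fun p : 'I_n * 'I_n => p.1 <= p.2) (graph_word G)).
apply: eq_card => w.
rewrite !inE; apply/eqP/forallP => [<- [a b]|agree].
  by apply/implyP => /= ab; rewrite ffunE /= mem_upper_graph.
have agree_ab (a b : 'I_n) : a <= b -> w (a, b) = ([set a; b] \in G).
  by move=> ab; move: (agree (a, b)); rewrite /= ab ffunE => /eqP.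
apply/setP => e; apply/idP/idP.
  by case/imsetP => -[a b]; rewrite inE /= => /andP [ab wab] ->; rewrite -agree_ab.
move=> eG; have [a [b [ab Eab]]] := edges_le2_ord_set2 (Gedges _ eG).
by rewrite Eab mem_upper_graph // agree_ab // -Eab.
Qed.

Lemma card_upper_graph_preimage (GG : {set {set {set 'I_n}}}) :
  (forall G, G \in GG -> G \subset edges_le2 'I_n) ->
  #|[set w | upper_graph w \in GG]| = #|GG| * 2 ^ nlower.
Proof.
move=> GGedges; rewrite (card_sum_fibres upper_graph).
transitivity (\sum_(G in GG) 2 ^ nlower); last by rewrite sum_nat_const.
rewrite [RHS]big_mkcond /=; apply: eq_bigr => G _; case: ifP => GG_G.
  rewrite -(card_upper_graph_fibre (GGedges _ GG_G)); apply: eq_card => w; rewrite !inE.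
  by case: eqP => [->|]; rewrite ?GG_G ?andbF.
by apply: eq_card0 => w; rewrite !inE; case: eqP => [->|]; rewrite ?GG_G ?andbF.
Qed.

Lemma card_word_upper : 2 ^ (n ^ 2) = 2 ^ #|edges_le2 'I_n| * 2 ^ nlower.
Proof.
rewrite -card_word -card_powerset -card_upper_graph_preimage => [|G]; last by rewrite inE.
by apply: eq_card => w; rewrite !inE upper_graph_sub.
Qed.

Lemma upper_graph_line (v : {ffun 'I_n * 'I_n -> option bool}) : is_poly_var_word v ->
  upper_graph (subst_word v false) \subset upper_graph (subst_word v true) /\
  iso_to_Ccirc (gsum (upper_graph (subst_word v true)) (upper_graph (subst_word v false))).
Proof.
case=> X [X0 /setP vX].
have vNone p : (v p == None) = (p.1 \in X) && (p.2 \in X) by move: (vX p); rewrite !inE.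
have sub : upper_graph (subst_word v false) \subset upper_graph (subst_word v true).
  apply/subsetP => e /imsetP [p]; rewrite inE => /andP [p12 wp] ->.
  by apply/imsetP; exists p; rewrite // inE p12; move: wp; rewrite !ffunE; case: (v p).
split => //; rewrite /gsum (_ : upper_graph (subst_word v false) :\: _ = set0) ?setU0; last first.
  by apply/eqP; rewrite setD_eq0.
suff -> : upper_graph (subst_word v true) :\: upper_graph (subst_word v false) = clique X.
  exact: clique_iso_to_Ccirc.
apply/setP => e; apply/setDP/imset2P.
  case=> /imsetP [p]; rewrite inE => /andP [p12 wp] -> /negP nfalse.
  case E : (v p) => [c|]; last by move/eqP: E; rewrite vNone => /andP [p1 p2]; exists p.1 p.2.
  exfalso; apply: nfalse; rewrite mem_upper_graph // -surjective_pairing.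
  by move: wp; rewrite !ffunE E.
case=> a b aX bX ->.
wlog ab : a b aX bX / a <= b.
  by move=> W; case: (leqP a b) => [|/ltnW] ab; [|rewrite setUC]; apply: W.
have E : v (a, b) = None by apply/eqP; rewrite vNone aX bX.
by rewrite !mem_upper_graph // !ffunE E.
Qed.

End UpperGraph.

Lemma HJ_code_upper_graph_preimage n (GG : {set {set {set 'I_n}}}) :
  HJ_code GG -> ~ contains_poly_line [set w | upper_graph w \in GG].
Proof.
case=> _ GGcode [v [pv]]; rewrite !inE => -[GG_false GG_true].
by have [sub iso] := upper_graph_line pv; apply: (GGcode _ _ GG_true GG_false sub iso).
Qed.

Section Blocks.
Variables n m : nat.
Local Notation M := m.+1.
Local Notation Q := (2 ^ #|edges_le2 'I_M|).

Definition in_block j (i : 'I_n) : bool := i %/ M == j.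
Definition in_block2 j (p : 'I_n * 'I_n) : bool := in_block j p.1 && in_block j p.2.
Definition block_pos (i : 'I_n) : 'I_M := inord (i %% M).

Definition clear_block j (w : word n) : word n :=
  [ffun p => if in_block2 j p then false else w p].
Definition block_fibre j (r : word n) : {set word n} := [set w | clear_block j w == r].
Definition sym_block j : {set word n} :=
  [set w : word n | [forall p, in_block2 j p ==> (w p == w (p.2, p.1))]].
Definition block_word j (r : word n) (G : {set {set 'I_M}}) : word n :=
  [ffun p => if in_block2 j p then [set block_pos p.1; block_pos p.2] \in G else r p].

Lemma clear_blockK j w : clear_block j (clear_block j w) = clear_block j w.
Proof. by apply/ffunP => p; rewrite !ffunE; case: (in_block2 j p). Qed.

Lemma clear_block_fibre j r w : w \in block_fibre j r -> clear_block j r = r.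
Proof. by rewrite inE => /eqP <-; rewrite clear_blockK. Qed.

Lemma sym_block_clear j k w : j != k -> (clear_block k w \in sym_block j) = (w \in sym_block j).
Proof.
move=> jk; rewrite !inE; apply: eq_forallb => p.
case jp: (in_block2 j p) => //=; move: jp; rewrite /in_block2 /in_block => /andP [/eqP j1 /eqP j2].
by rewrite !ffunE /in_block2 /in_block /= j1 j2 (negbTE jk).
Qed.

Definition asym_blocks k : {set word n} := [set w | all (fun j => w \notin sym_block j) (iota 0 k)].

Lemma asym_blocks0 : asym_blocks 0 = setT.
Proof. by apply/setP => w; rewrite !inE. Qed.

Lemma asym_blocksS k : asym_blocks k.+1 = asym_blocks k :\: sym_block k.
Proof. by apply/setP => w; rewrite !inE -addn1 iotaD all_cat /= andbT andbC add0n inE. Qed.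

Lemma asym_blocks_clear k w : (clear_block k w \in asym_blocks k) = (w \in asym_blocks k).
Proof.
rewrite !inE; apply: eq_in_all => j; rewrite mem_iota add0n => /andP [_ jk].
by rewrite sym_block_clear // ltn_eqF.
Qed.

Lemma card_le_asym_blocks_sym (A : {set word n}) k :
  #|A| <= #|A :&: asym_blocks k| + \sum_(j < k) #|A :&: sym_block j|.
Proof.
elim: k => [|k IH]; first by rewrite asym_blocks0 setIT big_ord0 addn0.
apply: (leq_trans IH); rewrite big_ord_recr /= [\sum_(i < k) _ + _]addnC addnA leq_add2r.
apply: leq_trans (leq_card_setU _ _); apply: subset_leq_card.
apply/subsetP => w; rewrite asym_blocksS !(in_setI, in_setU, in_setD).
by case: (w \in A); case: (w \in sym_block k); case: (w \in asym_blocks k).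
Qed.

Section OneBlock.
Variables (j : nat) (fits : j * M + M <= n).

Lemma block_emb_lt (a : 'I_M) : j * M + a < n.
Proof. by apply: leq_trans fits; rewrite ltn_add2l. Qed.

Definition block_emb (a : 'I_M) : 'I_n := Ordinal (block_emb_lt a).

Lemma in_block_emb a : in_block j (block_emb a).
Proof. by rewrite /in_block /= divnMDl // divn_small // addn0. Qed.

Lemma block_emb_pos a : block_pos (block_emb a) = a.
Proof. by rewrite /block_pos /= modnMDl modn_small // inord_val. Qed.

Lemma block_pos_emb i : in_block j i -> block_emb (block_pos i) = i.
Proof.
move=> /eqP ji; apply: val_inj => /=; rewrite inordK ?ltn_pmod //.
by rewrite {2}(divn_eq i M) ji mulnC.
Qed.

Lemma block_emb_inj : injective block_emb.
Proof. by move=> a b E; rewrite -(block_emb_pos a) E block_emb_pos. Qed.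

Lemma card_block2 : #|[set p : 'I_n * 'I_n | in_block2 j p]| = M * M.
Proof.
have -> : [set p : 'I_n * 'I_n | in_block2 j p] =
    setX [set i | in_block j i] [set i | in_block j i].
  by apply/setP => p; rewrite !inE.
have -> : [set i | in_block j i] = block_emb @: setT.
  apply/setP => i; rewrite inE; apply/idP/imsetP => [ji|[a _ ->]]; last exact: in_block_emb.
  by exists (block_pos i); rewrite ?block_pos_emb.
by rewrite cardsX card_imset ?cardsT ?card_ord //; apply: block_emb_inj.
Qed.

Lemma card_block_fibre r : clear_block j r = r -> #|block_fibre j r| = 2 ^ (M * M).
Proof.
move=> rclear; rewrite -card_block2.
have -> : block_fibre j r = [set w : word n | [forall p, ~~ in_block2 j p ==> (w p == r p)]].
  apply/setP => w; rewrite !inE; apply/eqP/forallP => [<- p|agree].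
    by apply/implyP => /negbTE jp; rewrite ffunE jp.
  apply/ffunP => p; rewrite ffunE; case: ifP => jp; first by rewrite -rclear ffunE jp.
  by move: (agree p); rewrite jp => /eqP.
by rewrite card_ffun_agree_on; congr (2 ^ _); apply: eq_card => p; rewrite !inE negbK.
Qed.

Lemma block_word_sym_fibre r G : clear_block j r = r ->
  block_word j r G \in sym_block j :&: block_fibre j r.
Proof.
move=> rclear; rewrite !inE; apply/andP; split.
  apply/forallP => p; apply/implyP => jp; rewrite !ffunE /in_block2 /=.
  by move: jp; rewrite /in_block2 => /andP [-> ->]; rewrite setUC.
apply/eqP/ffunP => p; rewrite !ffunE; case: ifP => jp; first by rewrite -rclear ffunE jp.
by rewrite jp.
Qed.

Lemma block_word_inj r : {in powerset (edges_le2 'I_M) &, injective (block_word j r)}.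
Proof.
move=> G G'; rewrite !inE => /subsetP Gedges /subsetP G'edges E.
have sameG a b : ([set a; b] \in G) = ([set a; b] \in G').
  move/ffunP: E => /(_ (block_emb a, block_emb b)).
  by rewrite !ffunE /in_block2 /= !in_block_emb !block_emb_pos.
apply/setP => e; apply/idP/idP => eG.
  by have [a [b Eab]] := edges_le2_set2 (Gedges _ eG); rewrite Eab -sameG -Eab.
by have [a [b Eab]] := edges_le2_set2 (G'edges _ eG); rewrite Eab sameG -Eab.
Qed.

Lemma card_sym_block_fibre r : clear_block j r = r ->
  Q <= #|sym_block j :&: block_fibre j r|.
Proof.
move=> rclear; rewrite -card_powerset -(card_in_imset (@block_word_inj r)).
by apply: subset_leq_card; apply/subsetP => w /imsetP [G _ ->]; apply: block_word_sym_fibre.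
Qed.

Lemma block_word_surj r w : w \in sym_block j :&: block_fibre j r ->
  exists2 G : {set {set 'I_M}}, G \subset edges_le2 'I_M & block_word j r G = w.
Proof.
rewrite !inE => /andP [/forallP wsym /eqP wr].
exists [set e in edges_le2 'I_M |
        [exists a, exists b, (e == [set a; b]) && w (block_emb a, block_emb b)]].
  by apply/subsetP => e; rewrite inE => /andP [].
apply/ffunP => p; rewrite ffunE; case: ifP => jp; last by rewrite -wr ffunE jp.
move: (jp); rewrite /in_block2 => /andP [j1 j2].
rewrite inE set2_edges_le2 /=; apply/existsP/idP => [[a /existsP [b /andP [/eqP E wab]]]|wp].
  have [[e1 e2]|[e1 e2]] := eq_set2 E; move: wab;
    rewrite -e1 -e2 (block_pos_emb j1) (block_pos_emb j2) -?surjective_pairing // => wab.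
  by move: (wsym (p.2, p.1)); rewrite /in_block2 /= j1 j2 wab -surjective_pairing => /eqP.
exists (block_pos p.1); apply/existsP; exists (block_pos p.2).
by rewrite eqxx (block_pos_emb j1) (block_pos_emb j2) -surjective_pairing.
Qed.

(* Each fibre of [clear_block j] has [2 ^ (M * M)] words, at least [Q] of them symmetric. *)
Lemma card_sym_block (X : {set word n}) :
  (forall w, (clear_block j w \in X) = (w \in X)) ->
  #|X| * Q <= #|X :&: sym_block j| * 2 ^ (M * M).
Proof.
move=> Xclear; rewrite (card_sum_fibres (clear_block j) X).
rewrite (card_sum_fibres (clear_block j) (X :&: sym_block j)) !big_distrl /=.
apply: leq_sum => r _.
have [->|/set0Pn [w0]] := eqVneq [set w in X | clear_block j w == r] set0; first by rewrite cards0.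
rewrite inE => /andP [w0X /eqP w0r].
have rclear : clear_block j r = r by rewrite -w0r clear_blockK.
have fibreX w : clear_block j w = r -> w \in X by rewrite -Xclear => ->; rewrite -w0r Xclear.
have -> : [set w in X | clear_block j w == r] = block_fibre j r.
  by apply/setP => w; rewrite !inE; case: eqP => [/fibreX ->|]; rewrite ?andbF.
have -> : [set w in X :&: sym_block j | clear_block j w == r] = sym_block j :&: block_fibre j r.
  by apply/setP => w; rewrite !inE; case: eqP => [/fibreX ->|]; rewrite ?andbF // andbT.
by rewrite card_block_fibre // mulnC leq_mul2r card_sym_block_fibre ?orbT.
Qed.

Lemma exists_dense_fibre (Y : {set word n}) : exists2 r, clear_block j r = r &
  #|Y| * 2 ^ (M * M) <= #|[set w in Y | clear_block j w == r]| * 2 ^ (n ^ 2).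
Proof.
have fibres : \sum_r #|block_fibre j r| = 2 ^ (n ^ 2).
  rewrite -card_word (card_sum_fibres (clear_block j)); apply: eq_bigr => r _.
  by apply: eq_card => w; rewrite !inE.
have [||r [fibre_gt0 hr]] := @exists_ratio_ge_average _
  (fun r => #|[set w in Y | clear_block j w == r]|) (fun r => #|block_fibre j r|).
- by rewrite fibres expn_gt0.
- move=> r /eqP; rewrite cards_eq0 => /eqP F0; apply/eqP; rewrite cards_eq0; apply/eqP/setP => w.
  rewrite !inE; apply/negbTE/negP => /andP [_ /eqP wr].
  by move/setP: F0 => /(_ w); rewrite !inE wr eqxx.
have [w0 w0r] : exists w, w \in block_fibre j r by apply/set0Pn; rewrite -card_gt0.
have rclear := clear_block_fibre w0r.
by exists r => //; move: hr; rewrite -card_sum_fibres card_block_fibre // fibres.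
Qed.

Lemma block_line r (A : {set word n}) (G1 G2 : {set {set 'I_M}}) :
  G1 \subset edges_le2 'I_M -> G2 \subset G1 ->
  block_word j r G1 \in A -> block_word j r G2 \in A ->
  iso_to_Ccirc (gsum G1 G2) -> contains_poly_line A.
Proof.
move=> G1edges G21 AG1 AG2.
(* The looped clique [G1 :\: G2] on [V] becomes the variable set [X * X] inside block [j]. *)
rewrite /gsum (_ : G2 :\: G1 = set0) ?setU0; last by apply/eqP; rewrite setD_eq0.
move=> /(iso_to_Ccirc_clique (subset_trans (subsetDl _ _) G1edges)).
set V := vertex_set _ => -[V0 G12V].
have G12 a b : ([set a; b] \in G1 :\: G2) = (a \in V) && (b \in V) by rewrite G12V mem_clique.
pose X := [set i : 'I_n | in_block j i && (block_pos i \in V)].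
pose v := [ffun p => if (p.1 \in X) && (p.2 \in X) then None else Some (block_word j r G2 p)].
have vX p : (p.1 \in X) && (p.2 \in X) ->
    in_block2 j p /\ [set block_pos p.1; block_pos p.2] \in G1 :\: G2.
  by rewrite G12 !inE => /andP [/andP [j1 ->] /andP [j2 ->]]; rewrite /in_block2 j1 j2.
exists v; split.
  exists X; split; last by apply/setP => -[p1 p2]; rewrite inE ffunE in_setX; case: ifP.
  case/set0Pn: V0 => a aV; apply/set0Pn; exists (block_emb a).
  by rewrite inE in_block_emb block_emb_pos aV.
have -> : subst_word v false = block_word j r G2.
  apply/ffunP => p; rewrite !ffunE; case: ifP => // /vX [jp].
  by rewrite jp inE => /andP [/negbTE].
have -> : subst_word v true = block_word j r G1.
  apply/ffunP => p; rewrite !ffunE; case: ifP => [/vX [jp]|pX].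
    by rewrite jp inE => /andP [].
  case: ifP => // jp; move: pX; rewrite !inE.
  move: jp; rewrite /in_block2 => /andP [-> ->] /=; rewrite -G12 inE.
  by case: (_ \in G2) (subsetP G21 [set block_pos p.1; block_pos p.2]) => //= ->.
by split.
Qed.

End OneBlock.

Lemma card_asym_blocks k : k * M <= n ->
  #|asym_blocks k| * (2 ^ (M * M)) ^ k <= (2 ^ (M * M) - Q) ^ k * 2 ^ (n ^ 2).
Proof.
elim: k => [|k IH] fits; first by rewrite asym_blocks0 card_word !expn0 mul1n muln1.
have fits_k : k * M + M <= n by rewrite addnC -mulSn.
move: (IH (leq_trans (leq_addr _ _) fits_k)) (card_sym_block fits_k (@asym_blocks_clear k)).
rewrite asym_blocksS cardsD.
set b := #|asym_blocks k|; set c := #|_ :&: sym_block k|; set T := 2 ^ (M * M) => IHb bc.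
rewrite [T ^ _]expnS [(T - _) ^ _]expnS mulnA.
have drop : (b - c) * T <= b * (T - Q).
  by rewrite mulnBl mulnBr leq_sub2l.
apply: (@leq_trans (b * (T - Q) * T ^ k)); first by rewrite leq_mul2r drop orbT.
by rewrite mulnAC [X in X <= _]mulnC -[X in _ <= X]mulnA leq_mul2l IHb orbT.
Qed.

Definition block_family j (r : word n) (A : {set word n}) : {set {set {set 'I_M}}} :=
  [set G : {set {set 'I_M}} | (G \subset edges_le2 'I_M) && (block_word j r G \in A)].

Lemma block_family_line j r A : j * M + M <= n ->
  ~ HJ_code (block_family j r A) -> contains_poly_line A.
Proof.
move=> fits nocode; apply: contrapT => noline; apply: nocode; split.
  by move=> G; rewrite inE => /andP [].
move=> G1 G2; rewrite !inE => /andP [G1edges AG1] /andP [_ AG2] G21 iso.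
exact: noline (block_line fits G1edges G21 AG1 AG2 iso).
Qed.

Lemma card_block_family_ge j r (A : {set word n}) : j * M + M <= n ->
  #|[set w in A :&: sym_block j | clear_block j w == r]| <= #|block_family j r A|.
Proof.
move=> fits; apply: leq_trans (leq_imset_card (block_word j r) _); apply: subset_leq_card.
apply/subsetP => w; rewrite inE => /andP [/setIP [Aw wsym] /eqP wr].
have [|G Gedges Gw] := block_word_surj fits (r := r) (w := w).
  by rewrite in_setI wsym inE wr eqxx.
by apply/imsetP; exists G; rewrite // inE Gedges Gw.
Qed.

(* In densities: [dens A <= 1 / (1 + q) + q * dens (block_family j r A)]. *)
Lemma exists_dense_block_family (q : nat) (A : {set word n}) : 0 < q ->
  q * 2 ^ (M * M - #|edges_le2 'I_M|) * M <= n ->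
  exists j r, j * M + M <= n /\
    #|A| * (1 + q) * Q <= (Q + q * (1 + q) * #|block_family j r A|) * 2 ^ (n ^ 2).
Proof.
set P := 2 ^ (M * M - _); set k := q * P => q_gt0 fits.
have TQP : 2 ^ (M * M) = Q * P.
  by rewrite -expnD subnKC //; apply: leq_trans (card_edges_le2_le _) _; rewrite card_ord.
have k_gt0 : 0 < k by rewrite muln_gt0 q_gt0 expn_gt0.
have asym := geometric_decay_bound TQP erefl (expn_gt0 _ _) (expn_gt0 _ _) q_gt0
  (card_asym_blocks fits).
have [j [_ j_ge]] := @exists_ratio_ge_average _ (fun j : 'I_k => #|A :&: sym_block j|) (fun _ => 1)
  ltac:(by rewrite sum1_card card_ord) ltac:(by []).
rewrite muln1 sum1_card card_ord in j_ge.
have fits_j : j * M + M <= n.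
  by apply: leq_trans fits; rewrite addnC -mulSn leq_mul2r ltn_ord orbT.
have [r _ dense_r] := exists_dense_fibre fits_j (A :&: sym_block j).
exists j, r; split => //.
have symQ : (\sum_(i < k) #|A :&: sym_block i|) * Q <= q * #|block_family j r A| * 2 ^ (n ^ 2).
  apply: leq_trans (leq_mul j_ge (leqnn Q)) _.
  have -> : #|A :&: sym_block j| * k * Q = q * (#|A :&: sym_block j| * 2 ^ (M * M)).
    by rewrite TQP /k; lia.
  rewrite -mulnA leq_mul2l; apply/orP; right; apply: leq_trans dense_r _.
  by rewrite leq_mul2r card_block_family_ge ?orbT.
apply: (@leq_trans ((#|asym_blocks k| + \sum_(i < k) #|A :&: sym_block i|) * (1 + q) * Q)).
  rewrite !leq_mul2r; apply/orP; right; apply/orP; right.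
  by apply: leq_trans (card_le_asym_blocks_sym A k) _; rewrite leq_add2r subset_leq_card ?subsetIr.
rewrite !mulnDl [Q * _]mulnC; apply: leq_add; first by rewrite leq_mul2r asym orbT.
by move: (leq_mul symQ (leqnn (1 + q))); lia.
Qed.

End Blocks.

Local Open Scope ring_scope.

Lemma density_lower_bound (R : realFieldType) (d a g q Q W : R) :
  0 < Q -> 0 < W -> 0 < q ->
  d * W <= a -> a * (1 + q) * Q <= (Q + q * (1 + q) * g) * W ->
  (d * (1 + q) - 1) / (q * (1 + q)) <= g / Q.
Proof.
move=> Q_gt0 W_gt0 q_gt0 dense hA.
have q1_gt0 : 0 < 1 + q by rewrite addr_gt0.
have {}hA : d * (1 + q) * Q <= Q + q * (1 + q) * g.
  rewrite -(ler_pM2r W_gt0); apply: le_trans hA.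
  have -> : d * (1 + q) * Q * W = d * W * ((1 + q) * Q).
    by rewrite -!mulrA; congr (d * _); rewrite mulrA mulrC.
  by rewrite -[X in _ <= X]mulrA ler_wpM2r // mulr_ge0 // ltW.
rewrite ler_pdivlMr // mulrAC ler_pdivrMr ?mulr_gt0 // mulrBl mul1r lerBlDl.
by rewrite [g * _]mulrC.
Qed.

Section Delta.
Variables (R : realType) (n : nat).
Local Notation E := #|edges_le2 'I_n|.

Lemma density_upper_graph_preimage (GG : {set {set {set 'I_n}}}) :
  (forall G, G \in GG -> is_graph_on G) ->
  (#|[set w | upper_graph w \in GG]|)%:R = (#|GG|)%:R / 2 ^+ E * 2 ^+ (n ^ 2)%N :> R.
Proof.
move=> GGgraph; rewrite card_upper_graph_preimage // -[2 ^+ (n ^ 2)%N]natrX card_word_upper.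
by rewrite !natrM !natrX mulrA divfK // expf_neq0 // pnatr_eq0.
Qed.

Lemma HJ_code_le_Delta (GG : {set {set {set 'I_n}}}) :
  HJ_code GG -> (#|GG|)%:R / 2 ^+ E <= Delta R n.
Proof.
move=> code; rewrite ler_pM2r ?invr_gt0 ?exprn_gt0 // ler_nat.
by apply: leq_bigmax_cond; apply/asboolP.
Qed.

Lemma Delta_attained :
  exists2 GG : {set {set {set 'I_n}}}, HJ_code GG & Delta R n = (#|GG|)%:R / 2 ^+ E.
Proof.
have : (0 < #|[pred GG : {set {set {set 'I_n}}} | HJ_codeb GG]|)%N.
  by apply/card_gt0P; exists set0; rewrite inE; apply/asboolP; split => [G|G1 G2]; rewrite inE.
case/(eq_bigmax_cond (fun GG : {set {set {set 'I_n}}} => #|GG|)) => GG /asboolP code eqM.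
by exists GG; rewrite // /Delta -eqM.
Qed.

Lemma Delta_ge0 : 0 <= Delta R n.
Proof. by rewrite divr_ge0 ?exprn_ge0. Qed.

End Delta.

Lemma DPHJ_Delta_to_zero (R : realType) : DPHJ_2_2 R -> Delta_to_zero R.
Proof.
move=> dphj eps eps_gt0; set d := Num.min eps 1.
have [|N [_ lineN]] := dphj d; first by rewrite lt_min eps_gt0 ltr01 ge_min lexx orbT.
exists N => n nN; have [GG code ->] := Delta_attained R n.
have sparse : #|GG|%:R / 2 ^+ #|edges_le2 'I_n| < d.
  rewrite ltNge; apply/negP => dense; apply: (HJ_code_upper_graph_preimage code).
  apply: lineN nN _ _; rewrite (density_upper_graph_preimage R) ?ler_pM2r ?exprn_gt0 //.
  by case: code.
rewrite ger0_norm ?divr_ge0 ?exprn_ge0 //; apply: lt_le_trans sparse _.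
by rewrite ge_min lexx.
Qed.

Lemma Delta_to_zero_DPHJ (R : realType) : Delta_to_zero R -> DPHJ_2_2 R.
Proof.
move=> Delta0 d /andP [d_gt0 _].
have [q q_gt0 dq] : exists2 q : nat, (0 < q)%N & 1 < d * q%:R.
  have d_inv_ge0 : 0 <= d^-1 by rewrite invr_ge0 ltW.
  exists (Num.Def.archi_bound d^-1); last first.
    by have h := archi_boundP d_inv_ge0; rewrite -(ltr_pM2l d_gt0) mulfV ?gt_eqF in h.
  by rewrite -(ltr0n R); apply: le_lt_trans (archi_boundP d_inv_ge0).
have dq1 : 1 < d * (1 + q%:R) by apply: lt_le_trans dq _; rewrite mulrDr mulr1 lerDr ltW.
pose d' := (d * (1 + q%:R) - 1) / (q%:R * (1 + q%:R)).
have d'_gt0 : 0 < d' by rewrite divr_gt0 ?subr_gt0 ?mulr_gt0 ?addr_gt0 ?ltr0n.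
have [m Delta_m] := Delta0 d' d'_gt0; have {Delta_m}Delta_m := Delta_m m.+1 (leqnSn m).
set E := #|edges_le2 'I_m.+1| in Delta_m.
exists (q * 2 ^ (m.+1 * m.+1 - E) * m.+1)%N; split; first by rewrite !muln_gt0 q_gt0 expn_gt0.
move=> n fits A dense.
have [j [r [fits_j]]] := exists_dense_block_family A q_gt0 fits.
rewrite -(ler_nat R) !(natrM, natrD, natrX) => hA.
apply: (block_family_line (r := r) fits_j) => code; move: Delta_m.
rewrite ger0_norm ?Delta_ge0 // ltNge; apply/negP/negPn.
apply: le_trans (HJ_code_le_Delta R code).
by apply: density_lower_bound dense hA; rewrite ?exprn_gt0 ?ltr0n.
Qed.

Theorem propositionA1 (R : realType) : DPHJ_2_2 R <-> Delta_to_zero R.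
Proof. by split; [apply: DPHJ_Delta_to_zero | apply: Delta_to_zero_DPHJ]. Qed.
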